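(* Let $\mathcal{G}$ be a (possibly weighted) undirected graph on $n$ vertices $v_1,\dots,v_n$ in which every vertex has positive degree, and let $\mathbf{P}$, $\mathbf{D}$ be as in the context. Let $0 < t_1 < t_2 < \cdots < t_J$ be integers ($J \ge 1$), and define the filter bank $\mathcal{W}_J' = \{\boldsymbol{\Psi}_j', \boldsymbol{\Phi}_J'\}_{j=0}^{J-1}$ by $$\boldsymbol{\Psi}_0' = \mathbf{I}_n - \mathbf{P}^{t_1},\qquad \boldsymbol{\Psi}_j' = \mathbf{P}^{t_j} - \mathbf{P}^{t_{j+1}}\ (1 \le j \le J-1),\qquad \boldsymbol{\Phi}_J' = \mathbf{P}^{t_J}.$$ Then there exists a constant $C > 0$ depending only on $t_1$ and $t_J$ such that for all $\mathbf{x} \in \mathbb{R}^n$, $$C\,\|\mathbf{x}\|_{\mathbf{D}^{-1/2}}^2 \;\le\; \|\boldsymbol{\Phi}_J'\mathbf{x}\|_{\mathbf{D}^{-1/2}}^2 + \sum_{j=0}^{J-1} \|\boldsymbol{\Psi}_j'\mathbf{x}\|_{\mathbf{D}^{-1/2}}^2 \;\le\; \|\mathbf{x}\|_{\mathbf{D}^{-1/2}}^2 .$$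
   Context: $\mathbf{A}$ denotes the (symmetric, nonnegative) weighted adjacency matrix of $\mathcal{G}$, $d_i = \sum_k \mathbf{A}[i,k] > 0$ the degree of $v_i$, and $\mathbf{D} = \mathrm{diag}(d_1,\dots,d_n)$. $\mathbf{P} = \tfrac12(\mathbf{I}_n + \mathbf{A}\mathbf{D}^{-1})$ is the lazy random walk matrix; $\mathbf{P}^t$ denotes its $t$-th matrix power. Graph signals $\mathbf{x}\in\mathbb{R}^n$ are equipped with the weighted inner product $\langle \mathbf{x},\mathbf{y}\rangle_{\mathbf{D}^{-1/2}} = \langle \mathbf{D}^{-1/2}\mathbf{x}, \mathbf{D}^{-1/2}\mathbf{y}\rangle$ (standard Euclidean inner product on the right) and induced norm $\|\mathbf{x}\|_{\mathbf{D}^{-1/2}}^2 = \|\mathbf{D}^{-1/2}\mathbf{x}\|_2^2 = \sum_{i=1}^n \mathbf{x}[i]^2/d_i$; this space is denoted $L^2(\mathcal{G},\mathbf{D}^{-1/2})$. *)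

From HB Require Import structures.
From mathcomp Require Import all_boot all_order all_algebra.
From mathcomp Require Import reals.
Set Implicit Arguments. Unset Strict Implicit. Unset Printing Implicit Defensive.
Import Order.TTheory GRing.Theory Num.Theory.
Local Open Scope ring_scope.

Definition deg {R : realType} {n : nat} (A : 'M[R]_n) (i : 'I_n) : R :=
  \sum_(k < n) A i k.

Definition Dinv {R : realType} {n : nat} (A : 'M[R]_n) : 'M[R]_n :=
  diag_mx (\row_i (deg A i)^-1).

(* Lazy random walk matrix P = 1/2 (I + A D^{-1}). *)
Definition lazyP {R : realType} {n : nat} (A : 'M[R]_n) : 'M[R]_n :=
  (2%:R)^-1 *: (1%:M + A *m Dinv A).

Definition mxpow {R : realType} {n : nat} (M : 'M[R]_n) (t : nat) : 'M[R]_n :=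
  iter t (mulmx M) 1%:M.

Definition wnorm2 {R : realType} {n : nat} (A : 'M[R]_n) (x : 'cV[R]_n) : R :=
  \sum_(i < n) (x i 0) ^+ 2 / deg A i.

(* Filter bank W_J': scales t 1 < ... < t J (1-indexed). *)
Definition Psi' {R : realType} {n : nat} (A : 'M[R]_n) (t : nat -> nat) (j : nat)
  : 'M[R]_n :=
  if j == 0%N then 1%:M - mxpow (lazyP A) (t 1%N)
  else mxpow (lazyP A) (t j) - mxpow (lazyP A) (t j.+1).

Definition Phi' {R : realType} {n : nat} (A : 'M[R]_n) (t : nat -> nat) (J : nat)
  : 'M[R]_n := mxpow (lazyP A) (t J).

(* For the weighted inner product <x, y> = x^T D^-1 y, the lazy walk P is
   self-adjoint and 0 <= P <= I, since D^-1 P = (D^-1 + D^-1 A D^-1) / 2 and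
   sum_ik A_ik (x_i/d_i +- x_k/d_k)^2 >= 0.  Hence m |-> <x, P^m x> is
   nonincreasing (write P^m = P^k P^r P^k with r in {0, 1}), which gives
   |P^a x - P^b x|^2 + |P^b x|^2 <= |P^a x|^2 for a <= b; telescoping over
   the scales yields the upper frame bound 1.  The filters sum to I, so by
   Cauchy-Schwarz |x|^2 <= (J + 1) * (frame energy), and J <= t_J because
   the scales are strictly increasing positive integers: the lower frame
   bound is C = 1 / (t_J + 1). *)
From HB Require Import structures.
From mathcomp Require Import all_boot all_order all_algebra.
From mathcomp Require Import reals.
From mathcomp Require Import ring lra zify.
Set Implicit Arguments. Unset Strict Implicit. Unset Printing Implicit Defensive.
Import Order.TTheory GRing.Theory Num.Theory.
Local Open Scope ring_scope.

Lemma mxpowD (R : realType) n (M : 'M[R]_n) m k :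
  mxpow M (m + k) = mxpow M m *m mxpow M k.
Proof.
elim: m => [|m IH]; first by rewrite add0n mul1mx.
by rewrite addSn /mxpow /= -/(mxpow M (m + k)) IH mulmxA.
Qed.

Lemma mxpowSr (R : realType) n (M : 'M[R]_n) m : mxpow M m.+1 = mxpow M m *m M.
Proof. by rewrite -addn1 mxpowD /mxpow /= mulmx1. Qed.

Lemma mxpow1 (R : realType) n (M : 'M[R]_n) : mxpow M 1 = M.
Proof. exact: mulmx1. Qed.

Lemma sqr_sum_le (R : realType) N (a : 'I_N -> R) :
  (\sum_i a i) ^+ 2 <= N%:R * \sum_i a i ^+ 2.
Proof.
have diffs_ge0 : 0 <= \sum_i \sum_j (a i - a j) ^+ 2.
  by apply: sumr_ge0 => i _; apply: sumr_ge0 => j _; exact: sqr_ge0.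
have diffsE : \sum_i \sum_j (a i - a j) ^+ 2 =
  \sum_i \sum_j (a i ^+ 2 + a j ^+ 2 - 2%:R * (a i * a j)).
  by apply: eq_bigr => i _; apply: eq_bigr => j _; ring.
move: diffs_ge0; rewrite diffsE.
under eq_bigr => i _ do rewrite sumrB big_split /= sumr_const card_ord -mulr_sumr.
rewrite sumrB big_split /= sumr_const card_ord -mulr_sumr.
under [X in _ * X]eq_bigr => i _ do rewrite -mulr_sumr.
rewrite -mulr_suml -expr2 sumrMnl -mulr_natl.
move=> h; lra.
Qed.

Section WeightedInnerProduct.
Variables (R : realType) (n : nat) (w : 'I_n -> R).
Hypothesis w_gt0 : forall i, 0 < w i.

Definition wdot (x y : 'cV[R]_n) : R := \sum_i x i 0 * y i 0 / w i.

Lemma wdotC x y : wdot x y = wdot y x.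
Proof. by apply: eq_bigr => i _; rewrite (mulrC (x i 0)). Qed.

Lemma wdotDl x y z : wdot (x + y) z = wdot x z + wdot y z.
Proof. rewrite /wdot -big_split; apply: eq_bigr => i _; rewrite /= !mxE; ring. Qed.

Lemma wdotBl x y z : wdot (x - y) z = wdot x z - wdot y z.
Proof. rewrite /wdot -sumrB; apply: eq_bigr => i _; rewrite !mxE; ring. Qed.

Lemma wdotZl a x y : wdot (a *: x) y = a * wdot x y.
Proof. rewrite /wdot mulr_sumr; apply: eq_bigr => i _; rewrite !mxE; ring. Qed.

Lemma wdotBr x y z : wdot x (y - z) = wdot x y - wdot x z.
Proof. by rewrite wdotC wdotBl ![wdot _ x]wdotC. Qed.

Lemma wdotxx_ge0 x : 0 <= wdot x x.
Proof.
apply: sumr_ge0 => i _; apply: divr_ge0; last exact: ltW.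
by rewrite -expr2 sqr_ge0.
Qed.

Lemma wdot_sum_le N (v : 'I_N -> 'cV[R]_n) :
  wdot (\sum_k v k) (\sum_k v k) <= N%:R * \sum_k wdot (v k) (v k).
Proof.
rewrite {1 2}/wdot exchange_big mulr_sumr; apply: ler_sum => i _.
rewrite summxE -mulr_suml mulrA -expr2; apply: ler_wpM2r.
  by rewrite invr_ge0 ltW.
under [X in _ <= _ * X]eq_bigr => k _ do rewrite -expr2.
exact: sqr_sum_le.
Qed.

Lemma telescoping_frame_lower_bound (M : nat -> 'M[R]_n) J x :
  M 0%N = 1%:M ->
  wdot x x <= J.+1%:R *
    (\sum_(j < J) wdot ((M j - M j.+1) *m x) ((M j - M j.+1) *m x)
     + wdot (M J *m x) (M J *m x)).
Proof.
move=> M0.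
pose v (i : 'I_J.+1) := if (i < J)%N then (M i - M i.+1) *m x else M J *m x.
have vE : \sum_(j < J) (M j - M j.+1) *m x + M J *m x = \sum_i v i.
  by rewrite big_ord_recr /= /v ltnn; congr (_ + _); apply: eq_bigr => i _; rewrite /= ltn_ord.
have energyE : \sum_(j < J) wdot ((M j - M j.+1) *m x) ((M j - M j.+1) *m x)
    + wdot (M J *m x) (M J *m x) = \sum_i wdot (v i) (v i).
  by rewrite big_ord_recr /= /v ltnn; congr (_ + _); apply: eq_bigr => i _; rewrite /= ltn_ord.
have sum_vE : \sum_i v i = x.
  rewrite -vE -mulmx_suml -(big_mkord xpredT (fun j => M j - M j.+1))
    (@telescope_sumr_eq _ 0 J (fun k => - M k)) //.
    by rewrite opprK addrC mulmxDl mulNmx M0 mul1mx addNKr.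
  by move=> k _; rewrite opprK addrC.
by rewrite energyE -{1 2}sum_vE wdot_sum_le.
Qed.

End WeightedInnerProduct.

Section SelfAdjointContraction.
Variables (R : realType) (n : nat) (w : 'I_n -> R) (P : 'M[R]_n).
Hypothesis w_gt0 : forall i, 0 < w i.
Hypothesis P_selfadjoint : forall x y, wdot w (P *m x) y = wdot w x (P *m y).
Hypothesis P_form_ge0 : forall y, 0 <= wdot w y (P *m y).
Hypothesis P_form_le : forall y, wdot w y (P *m y) <= wdot w y y.

Local Notation "<< x , y >>" := (wdot w x y).

Lemma mxpow_selfadjoint m x y : << mxpow P m *m x, y >> = << x, mxpow P m *m y >>.
Proof.
elim: m x y => [|m IH] x y; first by rewrite !mul1mx.
by rewrite {1}/mxpow /= -/(mxpow P m) -mulmxA P_selfadjoint IH mulmxA -mxpowSr.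
Qed.

(* Positivity of P at z - P z, together with P <= I at P z. *)
Lemma wdot_mulmx_le z : << P *m z, P *m z >> <= << z, P *m z >>.
Proof.
have := P_form_ge0 (z - P *m z); have := P_form_le (P *m z).
rewrite mulmxBr wdotBl !wdotBr -[<< z, P *m (P *m z) >>]P_selfadjoint.
lra.
Qed.

Lemma wdot_mxpow_split k r y :
  << y, mxpow P (k + r + k) *m y >> = << mxpow P k *m y, mxpow P r *m (mxpow P k *m y) >>.
Proof. by rewrite mxpow_selfadjoint !mxpowD !mulmxA. Qed.

Lemma wdot_mxpowS_le y m :
  << y, mxpow P m.+1 *m y >> <= << y, mxpow P m *m y >>.
Proof.
have m_eq := odd_double_half m; set k := m./2 in m_eq.
case: (odd m) m_eq => m_eq.
- have -> : m.+1 = (k + 2 + k)%N by lia.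
  have -> : m = (k + 1 + k)%N by lia.
  rewrite !wdot_mxpow_split mxpowSr mxpow1 -mulmxA -P_selfadjoint.
  exact: wdot_mulmx_le.
- have -> : m.+1 = (k + 1 + k)%N by lia.
  have -> : m = (k + 0 + k)%N by lia.
  rewrite !wdot_mxpow_split mxpow1 mul1mx.
  exact: P_form_le.
Qed.

Lemma wdot_mxpow_le y m m' : (m <= m')%N ->
  << y, mxpow P m' *m y >> <= << y, mxpow P m *m y >>.
Proof.
apply: (@homo_leq _ (fun m => << y, mxpow P m *m y >>) (fun a b => b <= a)) => //.
- by move=> ? ? ? h1 h2; exact: le_trans h2 h1.
- exact: wdot_mxpowS_le.
Qed.

Lemma wdot_mxpowB_le x a b : (a <= b)%N ->
  << (mxpow P a - mxpow P b) *m x, (mxpow P a - mxpow P b) *m x >>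
  + << mxpow P b *m x, mxpow P b *m x >> <= << mxpow P a *m x, mxpow P a *m x >>.
Proof.
move=> le_ab.
have square_mxpow c d : << mxpow P c *m x, mxpow P d *m x >> = << x, mxpow P (c + d) *m x >>.
  by rewrite mxpow_selfadjoint mulmxA -mxpowD.
have := wdot_mxpow_le x (leq_add le_ab (leqnn b)).
rewrite mulmxBl wdotBl !wdotBr !square_mxpow (addnC b a); lra.
Qed.

Lemma telescoping_frame_upper_bound (s : nat -> nat) J x :
  (forall j, (j < J)%N -> (s j <= s j.+1)%N) ->
  \sum_(j < J) << (mxpow P (s j) - mxpow P (s j.+1)) *m x,
                  (mxpow P (s j) - mxpow P (s j.+1)) *m x >>
  + << mxpow P (s J) *m x, mxpow P (s J) *m x >>
  <= << mxpow P (s 0%N) *m x, mxpow P (s 0%N) *m x >>.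
Proof.
elim: J => [|J IH] s_mono; first by rewrite big_ord0 add0r.
rewrite big_ord_recr /= -addrA.
have := wdot_mxpowB_le x (s_mono J (ltnSn J)).
have := IH (fun j lt_jJ => s_mono j (ltnW lt_jJ)); lra.
Qed.

End SelfAdjointContraction.

Section LazyRandomWalk.
Variables (R : realType) (n : nat) (A : 'M[R]_n).
Hypothesis A_sym : A^T = A.
Hypothesis A_ge0 : forall i j, 0 <= A i j.
Hypothesis deg_gt0 : forall i, 0 < deg A i.

Local Notation "<< x , y >>" := (wdot (deg A) x y).

Lemma A_symE i j : A i j = A j i.
Proof. by rewrite -{1}A_sym mxE. Qed.

Definition adjacency_form (x y : 'cV[R]_n) : R :=
  \sum_i \sum_k A i k * ((deg A k)^-1 * x k 0) * ((deg A i)^-1 * y i 0).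

Lemma adjacency_formC x y : adjacency_form x y = adjacency_form y x.
Proof.
rewrite /adjacency_form exchange_big; apply: eq_bigr => i _; apply: eq_bigr => k _.
by rewrite A_symE; ring.
Qed.

Lemma wdot_adjacency x y : << A *m (Dinv A *m x), y >> = adjacency_form x y.
Proof.
apply: eq_bigr => i _; rewrite mxE !mulr_suml; apply: eq_bigr => k _.
by rewrite /Dinv mul_diag_mx !mxE; ring.
Qed.

Lemma lazyP_mulmx (x : 'cV[R]_n) : lazyP A *m x = 2%:R^-1 *: (x + A *m (Dinv A *m x)).
Proof. by rewrite /lazyP -scalemxAl mulmxDl mul1mx mulmxA. Qed.

Lemma lazyP_selfadjoint x y : << lazyP A *m x, y >> = << x, lazyP A *m y >>.
Proof.
rewrite !lazyP_mulmx wdotZl [wdot _ x _]wdotC wdotZl !wdotDl !wdot_adjacency.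
by rewrite wdotC adjacency_formC [<< y, x >>]wdotC.
Qed.

Lemma wdot_lazyP y : << y, lazyP A *m y >> = 2%:R^-1 * (<< y, y >> + adjacency_form y y).
Proof. by rewrite wdotC lazyP_mulmx wdotZl wdotDl wdot_adjacency. Qed.

(* Expand 0 <= sum_ik A_ik (u_i + s u_k)^2 with u = D^-1 y and use the
   symmetry of A: both square terms become << y, y >>. *)
Lemma adjacency_form_bound s y : s ^+ 2 = 1 -> 0 <= << y, y >> + s * adjacency_form y y.
Proof.
move=> s2.
pose u i := (deg A i)^-1 * y i 0.
pose Q := \sum_i \sum_k A i k * u i ^+ 2.
have normE : << y, y >> = Q.
  apply: eq_bigr => i _; rewrite -mulr_suml -/(deg A i) /u.
  by field; rewrite gt_eqF.
have Q_sym : \sum_i \sum_k A i k * u k ^+ 2 = Q.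
  rewrite /Q exchange_big; apply: eq_bigr => i _; apply: eq_bigr => k _.
  by rewrite A_symE.
have : 0 <= \sum_i \sum_k A i k * (u i + s * u k) ^+ 2.
  by apply: sumr_ge0 => i _; apply: sumr_ge0 => k _; rewrite mulr_ge0 ?sqr_ge0.
have -> : \sum_i \sum_k A i k * (u i + s * u k) ^+ 2 =
    \sum_i \sum_k (A i k * u i ^+ 2 + (2%:R * s) * (A i k * u k * u i)
                   + s ^+ 2 * (A i k * u k ^+ 2)).
  by apply: eq_bigr => i _; apply: eq_bigr => k _; ring.
under eq_bigr => i _ do rewrite !big_split /= -!mulr_sumr.
rewrite !big_split /= -!mulr_sumr -/Q Q_sym -normE s2.
rewrite -[\sum_i \sum_k A i k * u k * u i]/(adjacency_form y y); lra.
Qed.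

Lemma lazyP_form_ge0 y : 0 <= << y, lazyP A *m y >>.
Proof.
rewrite wdot_lazyP; have := @adjacency_form_bound 1 y (expr1n _ _); lra.
Qed.

Lemma lazyP_form_le y : << y, lazyP A *m y >> <= << y, y >>.
Proof.
rewrite wdot_lazyP.
have := @adjacency_form_bound (-1) y; rewrite sqrrN expr1n => /(_ erefl).
have := wdotxx_ge0 deg_gt0 y; lra.
Qed.

End LazyRandomWalk.

Lemma wnorm2E (R : realType) n (A : 'M[R]_n) x : wnorm2 A x = wdot (deg A) x x.
Proof. by apply: eq_bigr => i _; rewrite expr2. Qed.

Lemma leq_index_incr (t : nat -> nat) J :
  (0 < t 1)%N -> (forall j, (1 <= j < J)%N -> (t j < t j.+1)%N) ->
  (0 < J)%N -> (J <= t J)%N.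
Proof.
move=> t1_gt0; elim: J => [|[|J] IH] // t_incr _.
have := IH (fun j h => t_incr j ltac:(lia)) isT; have := t_incr J.+1; lia.
Qed.

Theorem theorem1 (R : realType) (a b : nat) :
  (0 < a)%N -> (a <= b)%N ->
  exists C : R, 0 < C /\
    forall (n : nat) (A : 'M[R]_n) (J : nat) (t : nat -> nat) (x : 'cV[R]_n),
      A^T = A ->
      (forall i j, 0 <= A i j) ->
      (forall i, 0 < deg A i) ->
      (0 < J)%N ->
      t 1%N = a -> t J = b ->
      (forall j : nat, (1 <= j < J)%N -> (t j < t j.+1)%N) ->
      C * wnorm2 A x <=
        wnorm2 A (Phi' A t J *m x) + \sum_(j < J) wnorm2 A (Psi' A t j *m x)
      /\
      wnorm2 A (Phi' A t J *m x) + \sum_(j < J) wnorm2 A (Psi' A t j *m x)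
        <= wnorm2 A x.
Proof.
move=> a_gt0 _; exists b.+1%:R^-1; split; first by rewrite invr_gt0 ltr0n.
move=> n A J t x A_sym A_ge0 deg_gt0 J_gt0 t1 tJ t_incr.
set P := lazyP A.
pose s j := if j == 0%N then 0%N else t j.
have PsiE j : Psi' A t j = mxpow P (s j) - mxpow P (s j.+1) by case: j.
have PhiE : Phi' A t J = mxpow P (s J) by rewrite /s; case: J J_gt0 {t_incr tJ}.
have P_s0 : mxpow P (s 0%N) = 1%:M by [].
have s_mono j : (j < J)%N -> (s j <= s j.+1)%N.
  by case: j => [|j] lt_jJ //; apply/ltnW/t_incr; lia.
have le_Jb : (J <= b)%N by rewrite -tJ leq_index_incr ?t1.
under eq_bigr => j _ do rewrite PsiE wnorm2E.
rewrite PhiE !wnorm2E addrC; split.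
- rewrite mulrC ler_pdivrMr ?ltr0n //.
  have := telescoping_frame_lower_bound deg_gt0 (M := fun j => mxpow P (s j)) J x P_s0.
  move/le_trans; apply.
  rewrite [X in _ <= X]mulrC ler_wpM2r ?ler_nat //.
  by apply: addr_ge0; [apply: sumr_ge0 => j _ |]; exact: wdotxx_ge0.
- have := telescoping_frame_upper_bound (lazyP_selfadjoint A_sym)
    (lazyP_form_ge0 A_sym A_ge0 deg_gt0) (lazyP_form_le A_sym A_ge0 deg_gt0) x s_mono.
  by rewrite P_s0 mul1mx.
Qed.
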